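(* Let $(X,\|\cdot\|)$ be a Banach space, let $C$ be a closed subspace of $X$, and let $T:C\to C$ be a mapping. Assume there exist two altering distance functions $\phi,\psi:[0,\infty)\to[0,\infty)$ such that for all $x,y\in C$: (i) $\phi(\|Tx-Ty\|)\le\phi(\|x-y\|)-\psi(\|x-y\|)$; (ii) $\phi(\|Tx-y\|)\le\phi(\|x-y\|)-\psi(\|x-y\|)$. Then the null vector $\theta$ of $X$ is the only fixed point of $T$.
   Context: A function $\varphi:[0,\infty)\to[0,\infty)$ is called an altering distance function if (i) $\varphi$ is monotone increasing and continuous, and (ii) $\varphi(t)=0$ if and only if $t=0$. *)

From HB Require Import structures.
From mathcomp Require Import all_boot all_order all_algebra.
From mathcomp Require Import all_classical all_reals all_analysis.
Set Implicit Arguments. Unset Strict Implicit. Unset Printing Implicit Defensive.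
Import Order.TTheory GRing.Theory Num.Theory.
Import numFieldNormedType.Exports.
Local Open Scope classical_set_scope.
Local Open Scope ring_scope.

(* An altering distance function phi : [0,oo) -> [0,oo), represented as a
   function R -> R whose behaviour is only constrained on [0,oo). *)
Definition altering_distance {R : realType} (phi : R -> R) : Prop :=
  (forall t, 0 <= t -> 0 <= phi t) /\
  (forall s t, 0 <= s -> s <= t -> phi s <= phi t) /\
  {within `[0, +oo[, continuous phi} /\
  (forall t, 0 <= t -> (phi t = 0 <-> t = 0)).

Definition linear_subspace {R : realType} {X : normedModType R} (C : set X) : Prop :=
  C 0 /\ (forall x y, C x -> C y -> C (x + y)) /\
  (forall (a : R) x, C x -> C (a *: x)).

From HB Require Import structures.
From mathcomp Require Import all_boot all_order all_algebra.
From mathcomp Require Import all_classical all_reals all_analysis.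
Set Implicit Arguments. Unset Strict Implicit. Unset Printing Implicit Defensive.
Import Order.TTheory GRing.Theory Num.Theory.
Import numFieldNormedType.Exports.
Local Open Scope classical_set_scope.
Local Open Scope ring_scope.

(* Taking y = x in (ii) gives phi |Tx - x| <= phi 0 - psi 0 = 0, so T is the
   identity on C. Then (i) reads phi |x - y| <= phi |x - y| - psi |x - y|,
   forcing psi |x - y| = 0, i.e. x = y: the subspace C is {0}. *)

Section AlteringDistance.
Variables (R : realType) (phi : R -> R).
Hypothesis phi_alt : altering_distance phi.

Lemma altering_distance0 : phi 0 = 0.
Proof. by case: phi_alt => _ [_ [_ phi_eq0]]; apply/phi_eq0. Qed.

Lemma altering_distance_norm_le0 (V : normedZmodType R) (v : V) :
  phi `|v| <= 0 -> v = 0.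
Proof.
case: phi_alt => phi_ge0 [_ [_ phi_eq0]] phi_le0.
have /(phi_eq0 _ (normr_ge0 v)) : phi `|v| = 0.
  by apply/le_anti; rewrite phi_le0 phi_ge0.
by move/normr0_eq0.
Qed.

End AlteringDistance.

Section AlteringContraction.
Variables (R : realType) (V : normedZmodType R) (C : set V) (T : V -> V).
Variables (phi psi : R -> R).
Hypotheses (phi_alt : altering_distance phi) (psi_alt : altering_distance psi).

Lemma altering_contraction_to_point_id :
  (forall x y, C x -> C y -> phi `|T x - y| <= phi `|x - y| - psi `|x - y|) ->
  forall x, C x -> T x = x.
Proof.
move=> contrT x Cx; apply/subr0_eq/(altering_distance_norm_le0 phi_alt).
have := contrT x x Cx Cx.
by rewrite subrr normr0 altering_distance0 // altering_distance0 // subrr.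
Qed.

Lemma altering_contraction_id_eq :
  (forall x y, C x -> C y -> phi `|T x - T y| <= phi `|x - y| - psi `|x - y|) ->
  (forall x, C x -> T x = x) -> forall x y, C x -> C y -> x = y.
Proof.
move=> contrT idT x y Cx Cy.
apply/subr0_eq/(altering_distance_norm_le0 psi_alt).
by have := contrT x y Cx Cy; rewrite !idT // lerBrDr gerDl.
Qed.

End AlteringContraction.

Theorem theorem2p3 (R : realType) (X : completeNormedModType R)
  (C : set X) (T : X -> X) (phi psi : R -> R) :
  linear_subspace C -> closed C ->
  (forall x, C x -> C (T x)) ->
  altering_distance phi -> altering_distance psi ->
  (forall x y, C x -> C y ->
     phi `|T x - T y| <= phi `|x - y| - psi `|x - y|) ->
  (forall x y, C x -> C y ->
     phi `|T x - y| <= phi `|x - y| - psi `|x - y|) ->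
  T 0 = 0 /\ (forall x, C x -> T x = x -> x = 0).
Proof.
move=> [C0 _] _ _ phi_alt psi_alt contrT contrT_pt.
have idT := altering_contraction_to_point_id phi_alt psi_alt contrT_pt.
split; first exact: idT.
move=> x Cx _.
exact: (altering_contraction_id_eq psi_alt contrT idT Cx C0).
Qed.
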